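(* Consider a first-price auction with participation revelation in an environment where the number of agents is random, drawn from a commonly known distribution with at least two agents almost surely. Agents have independent private valuations drawn i.i.d. from a continuous distribution $F$ and are risk-neutral. Then there exists an equilibrium in which every agent $i$ registers (indicates the intention to participate) and then bids $b^e(v_i,n)$, where $n$ is the number of registered bidders announced by the auctioneer.
   Context: First-price auction with participation revelation: (1) agents indicate their intention to bid (register); (2) the auctioneer announces $n$, the number of registered agents; (3) registered agents submit sealed bids, and only bids of registered agents are accepted; (4) the highest bidder receives the good and pays his bid, and all other agents pay $0$. There is no participation fee. An agent with valuation $v$ who wins and pays $t$ gets utility $v-t$; an agent who does not win and pays nothing gets $0$. For an integer $m\ge 2$, $b^e(v,m)=v-F(v)^{-(m-1)}\int_0^v F(u)^{m-1}\,du$. *)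

From HB Require Import structures.
From mathcomp Require Import all_boot all_order all_algebra.
From mathcomp Require Import all_classical all_reals all_analysis.
Set Implicit Arguments. Unset Strict Implicit. Unset Printing Implicit Defensive.
Import Order.TTheory GRing.Theory Num.Theory.
Import numFieldNormedType.Exports.
Local Open Scope classical_set_scope.
Local Open Scope ring_scope.

Section Auction.
Context {R : realType}.

Definition beq (F : R -> R) (v : R) (m : nat) : R :=
  v - (F v ^+ m.-1)^-1 *
      Rintegral (@lebesgue_measure R) `[0, v] (fun u => F u ^+ m.-1).

Context {d : measure_display} {Omega : measurableType d}.

Definition mutually_independent (P : probability Omega R) (X : nat -> Omega -> R) :=
  forall (s : seq nat), uniq s ->
  forall B : nat -> set R, (forall i, measurable (B i)) ->
  P (\big[setI/setT]_(i <- s) (X i @^-1` B i)) =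
  (\prod_(i <- s) P (X i @^-1` B i))%E.

(* Bidding stage, after the auctioneer announced n registered bidders.
   Our agent has valuation v and bids b; the n-1 other registered bidders
   (indices 0..n-2) have valuations X j and bid beq F (X j) n.
   The highest bid wins (ties broken uniformly at random), winner pays his bid. *)
Definition payoff (F : R -> R) (X : nat -> Omega -> R) (n : nat) (v b : R)
    (w : Omega) : R :=
  let others := [seq beq F (X j w) n | j <- iota 0 n.-1] in
  if all (fun c => c <= b) others
  then (v - b) / (1 + (count (fun c => c == b) others)%:R)
  else 0.

Definition EU (P : probability Omega R) (F : R -> R) (X : nat -> Omega -> R)
    (n : nat) (v b : R) : \bar R :=
  (\int[P]_w (payoff F X n v b w)%:E)%E.

(* The symmetric strategy profile "register, then bid beq F v n" is an
   equilibrium (sequentially rational at both stages) when: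
   - registration stage: given pN (distribution of the number n of registered
     bidders), the expected utility of registering and following the strategy
     is at least 0, the utility of not registering;
   - bidding stage: for every announced n that occurs with positive
     probability, no bid b gives a higher expected utility than beq F v n. *)
Definition register_and_bid_equilibrium (P : probability Omega R) (F : R -> R)
    (X : nat -> Omega -> R) (pN : nat -> R) : Prop :=
  forall v : R, 0 <= v ->
    (0 <= \sum_(n <oo) ((pN n)%:E * EU P F X n v (beq F v n)))%E /\
    (forall n : nat, 0 < pN n -> forall b : R,
        (EU P F X n v b <= EU P F X n v (beq F v n))%E).

End Auction.

(* Put G z := F z ^+ (n - 1), the probability that the n - 1 rival
   valuations all lie below z; then b^e = bid G, and bidding bid G z amounts
   to reporting z in the direct mechanism selling the good with probability
   G z at price bid G z.  The envelope identity (v - bid G v) * G v =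
   \int_0^v G makes truthful reporting optimal in that mechanism.  Hence
   bidding bid G v earns at least (v - bid G v) * G v, while a bid b < v wins
   only when all rival valuations lie in S = {x | bid G x <= b}, which bounds
   its payoff by (v - b) * G (sup S) (by v - b if S is unbounded); both bounds
   are limits of (v - b) * G y <= (v - bid G y) * G y with y in S.
   Registering is free and these payoffs are nonnegative, so registering is
   optimal as well. *)

From HB Require Import structures.
From mathcomp Require Import all_boot all_order all_algebra.
From mathcomp Require Import all_classical all_reals all_analysis.
From mathcomp Require Import ring lra.
Import Order.TTheory GRing.Theory Num.Theory.
Import numFieldNormedType.Exports.
Local Open Scope classical_set_scope.
Local Open Scope ring_scope.
Set Implicit Arguments. Unset Strict Implicit.

Local Notation mu := (@lebesgue_measure _).

Section integral_over_interval.
Context {R : realType}.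
Implicit Types (f : R -> R) (ba : bool) (a b c M : R).

Lemma continuous_integrable_itv f ba a b : continuous f ->
  mu.-integrable [set` Interval (BSide ba a) (BRight b)] (EFin \o f).
Proof.
move=> fc; apply: (@integrableS _ _ _ mu `[a, b]) => //.
- move=> x /=; rewrite !in_itv /= => /andP[+ ->]; rewrite andbT.
  by case: ba => //= /ltW.
- apply: continuous_compact_integrable; first exact: segment_compact.
  exact: continuous_subspaceT.
Qed.

Lemma Rintegral_itv_split f ba a c b : continuous f -> a <= c -> c <= b ->
  \int[mu]_(x in [set` Interval (BSide ba a) (BRight b)]) f x =
  \int[mu]_(x in [set` Interval (BSide ba a) (BRight c)]) f x +
  \int[mu]_(x in `]c, b]) f x.
Proof.
move=> fc ac cb.
have ac' : (BSide ba a <= BRight c)%O by rewrite bnd_simp; case: ba.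
have cb' : (BRight c <= BRight b)%O by rewrite bnd_simp.
rewrite (itv_bndbnd_setU ac' cb') Rintegral_setU //.
- by rewrite -(itv_bndbnd_setU ac' cb'); exact: continuous_integrable_itv.
- apply/disj_setPS => x [] /=; rewrite !in_itv /= => /andP[_ xc] /andP[cx _].
  by move: (lt_le_trans cx xc); rewrite ltxx.
Qed.

Lemma Rintegral_itv_cst ba a b M : a <= b ->
  \int[mu]_(x in [set` Interval (BSide ba a) (BRight b)]) M = (b - a) * M.
Proof.
move=> ab; rewrite Rintegral_cst // mulrC.
have := lebesgue_measure_itv (Interval (BSide ba a) (BRight b)).
rewrite /= lte_fin => ->.
by case: ltgtP ab => // -> _; rewrite subrr.
Qed.

Lemma Rintegral_itv_le f ba a b M : continuous f -> a <= b ->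
  (forall x, a <= x <= b -> f x <= M) ->
  \int[mu]_(x in [set` Interval (BSide ba a) (BRight b)]) f x <= (b - a) * M.
Proof.
move=> fc ab fM; rewrite -(Rintegral_itv_cst ba) //.
apply: le_Rintegral => //.
- exact: continuous_integrable_itv.
- apply: continuous_integrable_itv; exact: cst_continuous.
move=> x /=; rewrite in_itv /= => /andP[ax xb]; apply: fM; rewrite xb andbT.
by case: ba ax => // /ltW.
Qed.

Lemma Rintegral_itv_ge f ba a b M : continuous f -> a <= b ->
  (forall x, a <= x <= b -> M <= f x) ->
  (b - a) * M <= \int[mu]_(x in [set` Interval (BSide ba a) (BRight b)]) f x.
Proof.
move=> fc ab fM; rewrite -(Rintegral_itv_cst ba) //.
apply: le_Rintegral => //.
- apply: continuous_integrable_itv; exact: cst_continuous.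
- exact: continuous_integrable_itv.
move=> x /=; rewrite in_itv /= => /andP[ax xb]; apply: fM; rewrite xb andbT.
by case: ba ax => // /ltW.
Qed.

End integral_over_interval.

Section first_price_bid.
Context {R : realType} (G : R -> R).
Hypotheses (G_cont : continuous G) (G_ge0 : forall x, 0 <= G x)
  (G_nd : {homo G : x y / x <= y}).

Definition bid v := v - (G v)^-1 * \int[mu]_(x in `[0, v]) G x.

Lemma Rintegral_G_ge0 v : 0 <= \int[mu]_(x in `[0, v]) G x.
Proof. exact: Rintegral_ge0. Qed.

Lemma Rintegral_G_le v : 0 <= v -> \int[mu]_(x in `[0, v]) G x <= v * G v.
Proof.
move=> v0; rewrite -[v in v * _]subr0.
by apply: Rintegral_itv_le => // x /andP[_ xv]; exact: G_nd.
Qed.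

Lemma Rintegral_G_eq0 v : 0 <= v -> G v = 0 -> \int[mu]_(x in `[0, v]) G x = 0.
Proof.
move=> v0 Gv0; apply/eqP; rewrite eq_le Rintegral_G_ge0 andbT.
by have := Rintegral_G_le v0; rewrite Gv0 mulr0.
Qed.

Lemma bid_id v : G v = 0 -> bid v = v.
Proof. by move=> Gv0; rewrite /bid Gv0 invr0 mul0r subr0. Qed.

Lemma bid_le v : bid v <= v.
Proof.
rewrite /bid lerBlDr lerDl mulr_ge0 ?Rintegral_G_ge0 //.
by rewrite invr_ge0.
Qed.

Lemma bid_ge0 v : 0 <= v -> 0 <= bid v.
Proof.
move=> v0; have [Gv0|Gv_neq0] := eqVneq (G v) 0; first by rewrite bid_id.
have Gv_gt0 : 0 < G v by rewrite lt_def Gv_neq0 G_ge0.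
by rewrite subr_ge0 ler_pdivrMl // mulrC Rintegral_G_le.
Qed.

Lemma bid_surplus v : 0 <= v ->
  (v - bid v) * G v = \int[mu]_(x in `[0, v]) G x.
Proof.
move=> v0; rewrite /bid opprB addrC subrK.
have [Gv0|Gv_neq0] := eqVneq (G v) 0; first by rewrite Gv0 mulr0 Rintegral_G_eq0.
by rewrite mulrAC mulVf // mul1r.
Qed.

Lemma Rintegral_G_lt x v : x < v -> G x < G v ->
  \int[mu]_(y in `]x, v]) G y < (v - x) * G v.
Proof.
move=> xv Gxv; set m := (G x + G v) / 2.
have [c] : exists2 c, c \in `[x, v] & G c = m.
  apply: IVT; [exact: ltW | exact: continuous_subspaceT |].
  by rewrite (min_idPl (ltW Gxv)) (max_idPr (ltW Gxv)) /m; apply/andP; split; lra.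
rewrite in_itv /= => /andP[xc cv] Gc.
have x_lt_c : x < c.
  by rewrite lt_neqAle xc andbT; apply/eqP => xc_eq; move: Gc; rewrite -xc_eq /m; lra.
rewrite (Rintegral_itv_split _ G_cont xc cv).
have : \int[mu]_(y in `]x, c]) G y <= (c - x) * m.
  by apply: Rintegral_itv_le => // y /andP[_ yc]; rewrite -Gc; exact: G_nd.
have : \int[mu]_(y in `]c, v]) G y <= (v - c) * G v.
  by apply: Rintegral_itv_le => // y /andP[_ yv]; exact: G_nd.
have : (c - x) * m < (c - x) * G v by rewrite ltr_pM2l ?subr_gt0 // /m; lra.
have -> : (v - x) * G v = (c - x) * G v + (v - c) * G v by ring.
lra.
Qed.

Lemma bid_lt x v : 0 <= x -> x <= v -> G x < G v -> bid x < bid v.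
Proof.
move=> x0 xv Gxv.
have x_lt_v : x < v.
  by rewrite lt_neqAle xv andbT; apply: contraTneq Gxv => ->; rewrite ltxx.
have Gv_gt0 : 0 < G v by exact: le_lt_trans (G_ge0 x) Gxv.
have surplus_v : (v - bid v) * G v <
    \int[mu]_(y in `[0, x]) G y + (v - x) * G v.
  by rewrite bid_surplus ?(le_trans x0 xv) // (Rintegral_itv_split _ G_cont x0 xv)
    ltrD2l Rintegral_G_lt.
have surplus_x : \int[mu]_(y in `[0, x]) G y <= (x - bid x) * G v.
  by rewrite -bid_surplus // ler_wpM2l ?subr_ge0 ?bid_le // G_nd.
rewrite -(ltr_pM2r Gv_gt0); move: surplus_v surplus_x; rewrite !mulrBl; lra.
Qed.

Hypothesis G0 : G 0 = 0.

Lemma G_eq0 x : x <= 0 -> G x = 0.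
Proof. by move=> x0; apply/eqP; rewrite eq_le G_ge0 -G0 G_nd. Qed.

(* Type [v] gains nothing by imitating type [z] in the direct mechanism. *)
Lemma bid_incentive v z : 0 <= v ->
  (v - bid z) * G z <= (v - bid v) * G v.
Proof.
move=> v0; rewrite bid_surplus //.
have [z0|/ltW z0] := leP z 0; first by rewrite G_eq0 // mulr0 Rintegral_G_ge0.
have -> : (v - bid z) * G z = (v - z) * G z + \int[mu]_(x in `[0, z]) G x.
  by rewrite -bid_surplus //; ring.
have [zv|/ltW vz] := leP z v.
  rewrite (Rintegral_itv_split _ G_cont z0 zv) addrC lerD2l.
  by apply: Rintegral_itv_ge => // x /andP[zx _]; exact: G_nd.
rewrite (Rintegral_itv_split _ G_cont v0 vz).
have : \int[mu]_(x in `]v, z]) G x <= (z - v) * G z.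
  by apply: Rintegral_itv_le => // x /andP[_ xz]; exact: G_nd.
lra.
Qed.

End first_price_bid.

Section real_cdf.
Context {d} {Omega : measurableType d} {R : realType} (P : probability Omega R).
Variables (Y : Omega -> R) (F : R -> R).
Hypotheses (mY : measurable_fun setT Y)
  (PF : forall x, P (Y @^-1` `]-oo, x]) = (F x)%:E).

Let Y_RV : {RV P >-> R} := mfun_Sub (mem_set mY : Y \in mfun).

Let cdfE x : cdf Y_RV x = (F x)%:E.
Proof. exact: PF. Qed.

Lemma real_cdf_ge0 x : 0 <= F x.
Proof. by rewrite -lee_fin -cdfE cdf_ge0. Qed.

Lemma real_cdf_nondecreasing : {homo F : x y / x <= y}.
Proof. by move=> x y xy; rewrite -lee_fin -!cdfE cdf_nondecreasing. Qed.

Lemma real_cdf_cvgy1 : F x @[x --> +oo%R] --> (1 : R).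
Proof.
have /fine_cvgP[_] := cvg_cdfy1 Y_RV.
by rewrite (_ : fine \o cdf Y_RV = F) // funeqE => x /=; rewrite cdfE.
Qed.

End real_cdf.

Section all_below.
Context {d} {Omega : measurableType d} {R : realType}.
Variable X : nat -> Omega -> R.

Definition all_below k z := [set w | forall i, (i < k)%N -> X i w <= z].

Lemma all_belowE k z :
  all_below k z = \big[setI/setT]_(i <- iota 0 k) (X i @^-1` `]-oo, z]).
Proof.
rewrite -bigcap_seq; apply/seteqP; split => w /= Xw i.
  by rewrite /= mem_iota add0n in_itv /= => /Xw.
by move=> ik; have := Xw i; rewrite /= mem_iota add0n ik in_itv; apply.
Qed.

Hypothesis mX : forall j, measurable_fun setT (X j).

Lemma measurable_all_below k z : measurable (all_below k z).
Proof.
rewrite all_belowE big_seq_cond; apply: big_ind => //; first exact: measurableI.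
by move=> i _; rewrite -[_ @^-1` _]setTI; apply: mX.
Qed.

Lemma probability_all_below (P : probability Omega R) (F : R -> R) k z :
  (forall j x, P (X j @^-1` `]-oo, x]) = (F x)%:E) ->
  mutually_independent P X -> P (all_below k z) = (F z ^+ k)%:E.
Proof.
move=> PF indX; rewrite all_belowE (indX _ (iota_uniq 0 k) (fun=> `]-oo, z]%classic)) //.
rewrite (eq_bigr (fun=> (F z)%:E)) ?big_const_seq ?count_predT ?size_iota.
  by elim: k => [|k IHk] //=; rewrite exprS EFinM IHk.
by move=> i _; rewrite PF.
Qed.

End all_below.

Section integral_bounds.
Context {d} {T : measurableType d} {R : realType} (mu : {measure set T -> \bar R}).

(* No measurability is needed (that of the payoff is never established): the
   integral of a nonnegative function is a supremum over simple functions. *)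
Lemma ge0_le_integralT (f g : T -> \bar R) :
  (forall x, 0 <= f x)%E -> (forall x, f x <= g x)%E ->
  (\int[mu]_x f x <= \int[mu]_x g x)%E.
Proof.
move=> f0 fg; have g0 x : (0 <= g x)%E := le_trans (f0 x) (fg x).
rewrite (ge0_integralTE mu f0) (ge0_integralTE mu g0).
apply: ereal_sup_le => _ [h hf <-]; exists h => //= x.
exact: le_trans (hf x) (fg x).
Qed.

Lemma le0_integralT (f : T -> R) : (forall x, f x <= 0) ->
  (\int[mu]_x (f x)%:E <= 0)%E.
Proof.
move=> f0; under eq_integral do rewrite -[f _]opprK EFinN.
rewrite integral_ge0N => [|x _]; last by rewrite lee_fin oppr_ge0.
by rewrite oppe_le0 integral_ge0 // => x _; rewrite lee_fin oppr_ge0.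
Qed.

Lemma integral_scale_indic (A : set T) (c : R) : measurable A -> 0 <= c ->
  (\int[mu]_x (c * \1_A x)%:E = c%:E * mu A)%E.
Proof.
move=> mA c0; rewrite (@integralZl_indic _ _ _ mu setT measurableT (fun=> A)) //.
  by rewrite integral_indic // setIT.
by move=> /(le_lt_trans c0); rewrite ltxx.
Qed.

End integral_bounds.

Section payoff.
Context {d} {Omega : measurableType d} {R : realType}.
Variables (F : R -> R) (X : nat -> Omega -> R) (n : nat).
Local Notation G := (fun u => F u ^+ n.-1).

Lemma beqE v : beq F v n = bid G v.
Proof. by []. Qed.

Lemma all_bids_leP b w :
  reflect (forall j, (j < n.-1)%N -> bid G (X j w) <= b)
    (all (fun c => c <= b) [seq beq F (X j w) n | j <- iota 0 n.-1]).
Proof.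
rewrite all_map; apply: (iffP allP) => /= bids_le j.
  by move=> jk; apply: bids_le; rewrite mem_iota add0n jk.
by rewrite mem_iota add0n => /bids_le.
Qed.

Lemma payoff_ge0 v b w : b <= v -> 0 <= payoff F X n v b w.
Proof.
by move=> bv; rewrite /payoff; case: ifP => // _; rewrite divr_ge0 ?subr_ge0.
Qed.

Lemma payoff_le0 v b w : v <= b -> payoff F X n v b w <= 0.
Proof.
move=> vb; rewrite /payoff; case: ifP => // _.
by rewrite mulr_le0_ge0 ?subr_le0 // invr_ge0.
Qed.

Lemma payoff_le_margin v b w : b <= v -> payoff F X n v b w <= v - b.
Proof.
move=> bv; rewrite /payoff; case: ifP => _; last by rewrite subr_ge0.
by rewrite ler_pdivrMr ?ltr_wpDr // ler_peMr ?subr_ge0 // lerDl.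
Qed.

Lemma payoff_le_all_below v b z w : b <= v ->
  (forall x, bid G x <= b -> x <= z) ->
  payoff F X n v b w <= (v - b) * \1_(all_below X n.-1 z) w.
Proof.
move=> bv bid_le_z; rewrite indicE; case: (boolP (w \in _)) => [_|].
  by rewrite mulr1 payoff_le_margin.
rewrite notin_setE mulr0 /payoff => w_above; case: all_bids_leP => // bids_le.
by case: w_above => j /bids_le /bid_le_z.
Qed.

Hypothesis F_ge0 : forall x, 0 <= F x.

Lemma EU_beq_ge0 (P : probability Omega R) v : (0 <= EU P F X n v (beq F v n))%E.
Proof.
apply: integral_ge0 => w _; rewrite lee_fin payoff_ge0 // beqE bid_le //.
by move=> x; rewrite exprn_ge0.
Qed.

Lemma payoff_beq_ge_all_below v z w :
  (forall x, x <= z -> bid G x < bid G v) ->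
  (v - bid G v) * \1_(all_below X n.-1 z) w <= payoff F X n v (beq F v n) w.
Proof.
have bid_le_v : bid G v <= v by rewrite bid_le // => x; rewrite exprn_ge0.
move=> bid_lt_v; rewrite indicE; case: (boolP (w \in _)); last first.
  by rewrite mulr0 => _; rewrite payoff_ge0.
rewrite inE /= mulr1 /payoff => below_z.
have bids_lt j : (j < n.-1)%N -> bid G (X j w) < bid G v.
  by move=> /below_z; exact: bid_lt_v.
case: all_bids_leP => [_|[]]; last by move=> j /bids_lt /ltW.
rewrite (@eq_in_count _ _ pred0) ?count_pred0 ?addr0 ?divr1 //.
move=> c /mapP[j]; rewrite mem_iota add0n /= => /bids_lt + ->.
by rewrite beqE => /lt_eqF ->.
Qed.

End payoff.

Section bidding_stage.
Context {d} {Omega : measurableType d} {R : realType} (P : probability Omega R).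
Variables (F : R -> R) (X : nat -> Omega -> R).
Hypotheses (F_cont : continuous F) (F0 : F 0 = 0)
  (mX : forall j, measurable_fun setT (X j))
  (PF : forall j x, P (X j @^-1` `]-oo, x]) = (F x)%:E)
  (indX : mutually_independent P X).
Variables (n : nat) (v : R).
Hypotheses (n_gt1 : (1 < n)%N) (v_ge0 : 0 <= v).
Local Notation k := n.-1.
Local Notation G := (fun u => F u ^+ n.-1).

Let F_ge0 := real_cdf_ge0 (mX 0) (PF 0).
Let F_nd := real_cdf_nondecreasing (mX 0) (PF 0).

Let k_gt0 : (0 < k)%N.
Proof. by rewrite -ltnS prednK // ltnW. Qed.

Let G_cont : continuous G.
Proof.
move=> x; exact: (continuous_comp (@F_cont x) (@exprn_continuous _ k (F x))).
Qed.

Let G_ge0 x : 0 <= G x.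
Proof. exact: exprn_ge0. Qed.

Let G_nd : {homo G : x y / x <= y}.
Proof. by move=> x y xy; rewrite lerXn2r ?nnegrE ?F_nd. Qed.

Let G0 : G 0 = 0.
Proof. by rewrite /= F0 expr0n gtn_eqF. Qed.

Let EU_beq_ge_all_below z : (forall x, x <= z -> bid G x < bid G v) ->
  (((v - bid G v) * F z ^+ k)%:E <= EU P F X n v (beq F v n))%E.
Proof.
have c_ge0 : 0 <= v - bid G v by rewrite subr_ge0 (bid_le G_ge0).
move=> bid_lt_v; rewrite EFinM -(probability_all_below _ _ PF indX).
rewrite -integral_scale_indic //; last exact: measurable_all_below.
apply: ge0_le_integralT => w; last exact: payoff_beq_ge_all_below.
by rewrite lee_fin mulr_ge0 // indicE.
Qed.

Let EU_le_all_below b z : b <= v -> (forall x, bid G x <= b -> x <= z) ->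
  (EU P F X n v b <= ((v - b) * F z ^+ k)%:E)%E.
Proof.
move=> bv bid_le_z; rewrite EFinM -(probability_all_below _ _ PF indX).
rewrite -integral_scale_indic ?subr_ge0 //; last exact: measurable_all_below.
apply: ge0_le_integralT => w; last exact: payoff_le_all_below.
by rewrite lee_fin payoff_ge0.
Qed.

Lemma EU_beq_ge_surplus :
  (((v - bid G v) * G v)%:E <= EU P F X n v (beq F v n))%E.
Proof.
have EU_ge w : w <= v -> F w < F v ->
    (((v - bid G v) * F w ^+ k)%:E <= EU P F X n v (beq F v n))%E.
  move=> wv Fwv; apply: EU_beq_ge_all_below => x xw.
  have [x_lt0|x_ge0] := ltP x 0.
    rewrite bid_id; last exact: (G_eq0 G_ge0 G_nd G0 (ltW x_lt0)).
    exact: lt_le_trans x_lt0 (bid_ge0 G_cont G_ge0 G_nd v_ge0).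
  apply: bid_lt => //; first exact: le_trans xw wv.
  by rewrite ltrXn2r ?gtn_eqF // (le_lt_trans (F_nd xw)).
(* Rivals below a level w with F w < F v bid strictly less than bid G v, so
   ties do not occur; by the intermediate value theorem F w can approach F v. *)
case EU_eq: (EU P F X n v (beq F v n)) => [r| |]; last 2 first.
- by rewrite leey.
- by have := EU_beq_ge0 X n F_ge0 P v; rewrite EU_eq.
have := F_ge0 v; rewrite le_eqVlt => /predU1P[Fv0|Fv_gt0].
  by rewrite -Fv0 expr0n gtn_eqF // mulr0 -EU_eq EU_beq_ge0.
rewrite lee_fin; apply: (@cvgr_to_le _ (F v)^'- _ _ (fun s => (v - bid G v) * s ^+ k)).
  by apply: cvg_at_left_filter; apply: cvgMl_tmp; exact: exprn_continuous.
near=> s.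
have [w] : exists2 w, w \in `[0, v] & F w = s.
  apply: IVT => //; first exact: continuous_subspaceT.
  rewrite F0 (min_idPl (ltW Fv_gt0)) (max_idPr (ltW Fv_gt0)); apply/andP; split.
    by apply: ltW; near: s; exact: nbhs_left_gt.
  by apply: ltW; near: s; exact: nbhs_left_lt.
rewrite in_itv /= => /andP[_ wv] Fw; rewrite -lee_fin -EU_eq -Fw EU_ge // Fw.
by near: s; exact: nbhs_left_lt.
Unshelve. all: by end_near.
Qed.

Let deviation_le_surplus b x y : b <= v -> bid G y <= b -> x <= y ->
  (v - b) * G x <= (v - bid G v) * G v.
Proof.
move=> bv bid_y xy; apply: le_trans (bid_incentive G_cont G_ge0 G_nd G0 y v_ge0).
rewrite (@le_trans _ _ ((v - b) * G y)) ?ler_wpM2l ?G_nd ?subr_ge0 //.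
by rewrite ler_wpM2r // lerB.
Qed.

Let EU_le_surplus_bounded b : b <= v -> has_ubound [set x | bid G x <= b] ->
  (EU P F X n v b <= ((v - bid G v) * G v)%:E)%E.
Proof.
set S := [set x | bid G x <= b] => bv S_ub.
have S0 : S !=set0.
  have m0 : Num.min b 0 <= 0 by rewrite ge_min lexx orbT.
  exists (Num.min b 0); rewrite /S /= bid_id ?ge_min ?lexx //.
  exact: (G_eq0 G_ge0 G_nd G0 m0).
apply: le_trans (EU_le_all_below (z := sup S) bv _) _ => [x Sx|].
  exact: ub_le_sup.
rewrite lee_fin; apply: (@cvgr_to_le _ (sup S)^'- _ _ (fun x => (v - b) * G x)).
  by apply: cvg_at_left_filter; apply: cvgMl_tmp; exact: G_cont.
near=> x; have x_lt_sup : x < sup S by near: x; exact: nbhs_left_lt.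
have [y Sy /ltW xy] := sup_gt S0 x_lt_sup.
exact: deviation_le_surplus Sy xy.
Unshelve. all: by end_near.
Qed.

Let EU_le_surplus_unbounded b : b <= v -> ~ has_ubound [set x | bid G x <= b] ->
  (EU P F X n v b <= ((v - bid G v) * G v)%:E)%E.
Proof.
move=> bv S_unb; apply: (@le_trans _ _ (v - b)%:E).
  rewrite -[_%:E]mule1 -(probability_setT P) -integral_cst //.
  apply: ge0_le_integralT => w; rewrite lee_fin.
    exact: payoff_ge0.
  exact: payoff_le_margin.
rewrite lee_fin; apply: (@cvgr_to_le _ +oo%R _ _ (fun x => (v - b) * G x)).
  rewrite -[X in _ --> X]mulr1 -(expr1n _ k); apply: cvgMl_tmp.
  exact: (continuous_cvg _ (@exprn_continuous _ k 1) (real_cdf_cvgy1 (mX 0) (PF 0))).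
apply: nearW => x; apply: contrapT => x_gt_S; apply: S_unb; exists x => y Sy.
rewrite leNgt; apply/negP => /ltW xy; apply: x_gt_S.
exact: deviation_le_surplus Sy xy.
Qed.

Lemma EU_le_surplus b : (EU P F X n v b <= ((v - bid G v) * G v)%:E)%E.
Proof.
have [vb|/ltW bv] := leP v b.
  apply: le_trans (le0_integralT _ _) _ => [w|]; first exact: payoff_le0.
  by rewrite lee_fin mulr_ge0 ?subr_ge0 ?bid_le.
have [S_ub|S_unb] := pselect (has_ubound [set x | bid G x <= b]).
  exact: EU_le_surplus_bounded.
exact: EU_le_surplus_unbounded.
Qed.

End bidding_stage.

Theorem proposition4 (R : realType) (d : measure_display) (Omega : measurableType d)
    (P : probability Omega R)
    (F : R -> R) (X : nat -> Omega -> R) (pN : nat -> R) :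
  (* F: continuous distribution of valuations, supported on [0, +oo) *)
  continuous F -> F 0 = 0 ->
  (* valuations of the (other) agents: i.i.d. with cdf F *)
  (forall j, measurable_fun setT (X j)) ->
  (forall j (x : R), P (X j @^-1` `]-oo, x]) = (F x)%:E) ->
  mutually_independent P X ->
  (* distribution of the number of agents: at least two almost surely *)
  (forall n, 0 <= pN n) -> pN 0%N = 0 -> pN 1%N = 0 ->
  series pN @ \oo --> (1 : R) ->
  register_and_bid_equilibrium P F X pN.
Proof.
move=> F_cont F0 mX PF indX pN_ge0 pN0 pN1 _ v v_ge0.
have F_ge0 := real_cdf_ge0 (mX 0) (PF 0).
split=> [|n pNn_gt0 b].
  apply: nneseries_ge0 => n _ _; apply: mule_ge0; first by rewrite lee_fin.
  exact: EU_beq_ge0.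
have n_gt1 : (1 < n)%N by case: n pNn_gt0 => [|[|n]]; rewrite ?pN0 ?pN1 ?ltxx.
exact: le_trans (EU_le_surplus F_cont F0 mX PF indX n_gt1 v_ge0 b)
  (EU_beq_ge_surplus F_cont F0 mX PF indX n_gt1 v_ge0).
Qed.
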